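(* Let $L$ be a finite lattice which is a subdirect product $L\subseteq\prod_{i=1}^t L_i$ of finite subdirectly irreducible lattices. Regard $G(L)$ as a partial join-semilattice, and for $x\in L$ put $\varepsilon(x):=\{a\in G(L):\ a\le x\}$. Then $\varepsilon$ is an isomorphism from $L$ onto the set of all $\bigvee$-ideals of $(G(L),\bigvee)$ ordered by inclusion; in particular $L\setminus\{0\}$ is isomorphic to the join-semilattice of nonempty $\bigvee$-ideals, i.e. $F_\vee(G(L),\bigvee)\cong L\setminus\{0\}$.
   Context: $\pi_i:L\to L_i$ is the surjective restricted projection, $\sigma_i(y):=\bigwedge\{x\in L:\pi_i(x)=y\}$ its smallest pre-image map, and $G(L):=\bigcup_{i=1}^t\sigma_i(L_i\setminus\{0\})$ (the scaffolding). The partial join on $G(L)$: for $B\subseteq G(L)$, $\bigvee B$ (computed in $L$) is defined in $(G(L),\bigvee)$ iff it lies in $G(L)$. A subset $A\subseteq G(L)$ is a $\bigvee$-ideal if it is hereditary ($a\in A$, $b\in G(L)$, $b\le a$ imply $b\in A$) and closed under the defined partial joins ($B\subseteq A$ and $\bigvee B\in G(L)$ imply $\bigvee B\in A$). $F_\vee(G(L),\bigvee)$ denotes the join-semilattice of nonempty $\bigvee$-ideals under inclusion. *)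

From HB Require Import structures.
From mathcomp Require Import all_boot all_order.
Set Implicit Arguments. Unset Strict Implicit. Unset Printing Implicit Defensive.
Import Order.Theory.
Local Open Scope order_scope.

Definition lattice_congruence (d : Order.disp_t) (T : latticeType d) (th : rel T) : Prop :=
  [/\ (forall x, th x x),
      (forall x y, th x y -> th y x),
      (forall x y z, th x y -> th y z -> th x z),
      (forall x y z, th x y -> th (x `&` z) (y `&` z))
    & (forall x y z, th x y -> th (x `|` z) (y `|` z))].

Definition nontrivial_rel (T : eqType) (th : rel T) : Prop :=
  exists x y, x != y /\ th x y.

Definition subdirectly_irreducible (d : Order.disp_t) (T : latticeType d) : Prop :=
  (exists x y : T, x != y) /\
  exists th : rel T, [/\ lattice_congruence th, nontrivial_rel th &
    forall th' : rel T, lattice_congruence th' -> nontrivial_rel th' ->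
      forall x y, th x y -> th' x y].

Definition lattice_hom (d d' : Order.disp_t) (T : latticeType d) (U : latticeType d')
  (f : T -> U) : Prop :=
  (forall x y, f (x `&` y) = f x `&` f y) /\ (forall x y, f (x `|` y) = f x `|` f y).

(* L is a subdirect product of the L i via the (restricted) projections pi i:
   each pi i is a surjective lattice homomorphism and the pi i jointly separate
   points (i.e. x |-> (pi i x)_i embeds L into the product). *)
Definition subdirect_product (d : Order.disp_t) (L : finTBLatticeType d) (t : nat)
  (dI : 'I_t -> Order.disp_t) (Li : forall i, finTBLatticeType (dI i))
  (pi : forall i, L -> Li i) : Prop :=
  [/\ (forall i, lattice_hom (pi i)),
      (forall i (y : Li i), exists x : L, pi i x = y)
    & (forall x y : L, (forall i, pi i x = pi i y) -> x = y)].

Section Scaffolding.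
Variables (d : Order.disp_t) (L : finTBLatticeType d) (t : nat)
  (dI : 'I_t -> Order.disp_t) (Li : forall i, finTBLatticeType (dI i))
  (pi : forall i, L -> Li i).

Definition sigma (i : 'I_t) (y : Li i) : L := \meet_(x : L | pi i x == y) x.

Definition scaffold : {set L} :=
  [set a : L | [exists i : 'I_t, [exists y : Li i, (y != \bot) && (a == sigma y)]]].

Definition join_ideal (A : {set L}) : Prop :=
  [/\ A \subset scaffold,
      (forall a b, a \in A -> b \in scaffold -> b <= a -> b \in A)
    & (forall B : {set L}, B \subset A ->
         \join_(b in B) b \in scaffold -> \join_(b in B) b \in A)].

Definition epsilon (x : L) : {set L} := [set a in scaffold | a <= x].
End Scaffolding.

(** Each projection [pi i] preserves all joins and meets, so it has a lower
    adjoint [sigma i]: [sigma y <= x] iff [y <= pi i x].  Since the projections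
    separate points, every [x] is the join of the [sigma (pi i x)], which lie in
    [epsilon x]; hence [epsilon] is an order embedding.  Conversely, let [A] be
    a join-ideal with join [s].  For each [i], [sigma (pi i s)] is the join of
    the elements of [A] below it (it lies below the join of the
    [sigma (pi i b) <= b], [b \in A]), so it belongs to [A]; and every element
    [sigma y] of [G(L)] below [s] lies below some [sigma (pi i s)], so [A] is
    exactly [epsilon s]. *)

From HB Require Import structures.
From mathcomp Require Import all_boot all_order.
Import Order.Theory.
Local Open Scope order_scope.
Set Implicit Arguments. Unset Strict Implicit.

Section SubdirectProduct.
Variables (d : Order.disp_t) (L : finTBLatticeType d) (t : nat)
  (dI : 'I_t -> Order.disp_t) (Li : forall i, finTBLatticeType (dI i))
  (pi : forall i, L -> Li i).
Hypothesis subdirect_pi : subdirect_product pi.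

Local Notation sigma := (sigma pi).
Local Notation scaffold := (scaffold pi).
Local Notation epsilon := (epsilon pi).

Lemma pi_surj i (y : Li i) : exists x, pi i x = y.
Proof. by case: subdirect_pi => _ + _; apply. Qed.

Lemma pi_meet i x y : pi i (x `&` y) = pi i x `&` pi i y.
Proof. by case: subdirect_pi => /(_ i) []. Qed.

Lemma pi_mono i x y : x <= y -> pi i x <= pi i y.
Proof. by move/meet_idPl => xy; apply/meet_idPl; rewrite -pi_meet xy. Qed.

Lemma pi_bot i : pi i \bot = \bot.
Proof.
have [x pi_x] := pi_surj (\bot : Li i).
by apply/eqP; rewrite -lex0 -pi_x pi_mono ?le0x.
Qed.

Lemma pi_top i : pi i \top = \top.
Proof.
have [x pi_x] := pi_surj (\top : Li i).
by apply/le_anti; rewrite lex1 -pi_x pi_mono ?lex1.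
Qed.

Lemma pi_joins i (B : {set L}) :
  pi i (\join_(b in B) b) = \join_(b in B) pi i b.
Proof.
apply: (big_morph (pi i)); last exact: pi_bot.
by case: subdirect_pi => /(_ i) [].
Qed.

Lemma pi_sigma i (y : Li i) : pi i (sigma y) = y.
Proof.
have pi_meets : pi i (sigma y) = \meet_(x : L | pi i x == y) pi i x.
  exact: (big_morph (pi i) (pi_meet i) (pi_top i)).
have [z pi_z] := pi_surj y.
apply/le_anti/andP; split.
  by rewrite pi_meets -[X in _ <= X]pi_z; apply: meets_inf; rewrite pi_z.
by rewrite pi_meets; apply/meetsP => x /eqP ->.
Qed.

Lemma sigmaP i (y : Li i) x : (sigma y <= x) = (y <= pi i x).
Proof.
apply/idP/idP => [/(pi_mono i)|y_le]; first by rewrite pi_sigma.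
have [z pi_z] := pi_surj y.
apply: (@meets_max _ _ _ (z `&` x)); last exact: leIr.
by rewrite pi_meet pi_z; apply/eqP/meet_idPl.
Qed.

Lemma mem_scaffold i (y : Li i) : y != \bot -> sigma y \in scaffold.
Proof.
by move=> y0; rewrite inE; apply/existsP; exists i; apply/existsP; exists y; rewrite y0 /=.
Qed.

Lemma scaffoldP a :
  a \in scaffold -> exists i, exists2 y : Li i, y != \bot & a = sigma y.
Proof. by rewrite inE => /existsP [i /existsP [y /andP [y0 /eqP ->]]]; exists i, y. Qed.

Lemma bot_notin_scaffold : \bot \notin scaffold.
Proof.
apply/negP => /scaffoldP [i [y y0 sigma_y]].
by move: y0; rewrite -(pi_sigma y) -sigma_y pi_bot eqxx.
Qed.

Lemma mem_epsilon a x : (a \in epsilon x) = (a \in scaffold) && (a <= x).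
Proof. by rewrite inE. Qed.

Lemma sigma_pi_in_epsilon i x : pi i x != \bot -> sigma (pi i x) \in epsilon x.
Proof. by move=> pix0; rewrite mem_epsilon mem_scaffold // sigmaP lexx. Qed.

Lemma joins_epsilon x : \join_(a in epsilon x) a = x.
Proof.
case: subdirect_pi => _ _; apply => i; apply/le_anti/andP; split.
  by apply/pi_mono/joinsP => a; rewrite mem_epsilon => /andP [].
have [->|pix0] := eqVneq (pi i x) \bot; first exact: le0x.
by rewrite -sigmaP; exact: (joins_sup _ (sigma_pi_in_epsilon pix0)).
Qed.

Lemma join_ideal_epsilon x : join_ideal pi (epsilon x).
Proof.
split.
- by apply/subsetP => a; rewrite mem_epsilon => /andP [].
- by move=> a b; rewrite !mem_epsilon => /andP [_ a_x] -> /= /le_trans; apply.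
- move=> B /subsetP B_x B_G; rewrite mem_epsilon B_G.
  by apply/joinsP => b /B_x; rewrite mem_epsilon => /andP [].
Qed.

Section JoinIdeal.
Variable A : {set L}.
Hypothesis ideal_A : join_ideal pi A.

Let s := \join_(b in A) b.

Lemma sigma_pi_in_ideal i b : b \in A -> pi i b != \bot -> sigma (pi i b) \in A.
Proof.
case: ideal_A => _ hereditary _ b_A pib0.
by apply: (hereditary b) => //; [exact: mem_scaffold | rewrite sigmaP].
Qed.

Lemma sigma_pi_joins_in_ideal i : pi i s != \bot -> sigma (pi i s) \in A.
Proof.
move=> pis0; set B := [set c in A | c <= sigma (pi i s)].
have joins_B : \join_(c in B) c = sigma (pi i s).
  apply/le_anti/andP; split; first by apply/joinsP => c; rewrite inE => /andP [].
  rewrite sigmaP /s !pi_joins; apply/joinsP => b b_A.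
  have [->|pib0] := eqVneq (pi i b) \bot; first exact: le0x.
  have B_b : sigma (pi i b) \in B.
    rewrite inE sigma_pi_in_ideal //= sigmaP pi_sigma.
    exact/pi_mono/(joins_sup _ b_A).
  rewrite -[X in X <= _](pi_sigma (pi i b)) -pi_joins.
  exact/pi_mono/(joins_sup _ B_b).
case: ideal_A => _ _ closed; rewrite -joins_B.
by apply: closed; [apply/subsetP => c; rewrite inE => /andP [] | rewrite joins_B mem_scaffold].
Qed.

Lemma epsilon_joins_ideal : epsilon s = A.
Proof.
case: (ideal_A) => /subsetP A_G hereditary _.
apply/setP => a; rewrite mem_epsilon; apply/idP/idP; last first.
  by move=> a_A; rewrite A_G //=; exact: joins_sup.
case/andP => /scaffoldP [i [y y0 ->]] y_s.
have pis0 : pi i s != \bot.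
  by apply: contraNN y0 => /eqP pis0; rewrite -lex0 -pis0 -sigmaP.
apply: (hereditary _ _ (sigma_pi_joins_in_ideal pis0)); first exact: mem_scaffold.
by rewrite sigmaP pi_sigma -sigmaP.
Qed.

End JoinIdeal.

Lemma le_epsilon x y : (x <= y) = (epsilon x \subset epsilon y).
Proof.
apply/idP/idP => [x_y|/subsetP eps_xy].
  by apply/subsetP => a; rewrite !mem_epsilon => /andP [-> /le_trans]; apply.
rewrite -(joins_epsilon x) -(joins_epsilon y); apply/joinsP => a /eps_xy.
exact: joins_sup.
Qed.

Lemma epsilon_eq0 x : (epsilon x == set0) = (x == \bot).
Proof.
apply/eqP/eqP => [eps0|->]; first by rewrite -(joins_epsilon x) eps0 big_set0.
apply/setP => a; rewrite mem_epsilon in_set0 lex0.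
by case: eqVneq => [->|]; rewrite ?andbF // andbT (negPf bot_notin_scaffold).
Qed.

End SubdirectProduct.

Theorem mainTheorem5 (d : Order.disp_t) (L : finTBLatticeType d) (t : nat)
  (dI : 'I_t -> Order.disp_t) (Li : forall i, finTBLatticeType (dI i))
  (pi : forall i, L -> Li i) :
  subdirect_product pi ->
  (forall i, subdirectly_irreducible (Li i)) ->
  [/\ (forall x : L, join_ideal pi (epsilon pi x)),
      (forall A : {set L}, join_ideal pi A -> exists x : L, epsilon pi x = A),
      (forall x y : L, (x <= y) = (epsilon pi x \subset epsilon pi y))
    & (forall x : L, (epsilon pi x == set0) = (x == \bot))].
Proof.
move=> subdirect_pi _; split.
- exact: join_ideal_epsilon.
- by move=> A ideal_A; exists (\join_(b in A) b); apply: epsilon_joins_ideal.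
- exact: le_epsilon.
- exact: epsilon_eq0.
Qed.
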